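(* Let $(D, \{ \prec_\alpha, \succ_\alpha \}_{\alpha \in \Omega})$ be a dendriform family algebra and $\{ T_\alpha : M \to A \}_{\alpha \in \Omega}$ an $\mathcal{O}$-operator family. Then there is a bijection $$\mathrm{Hom}_{\mathbf{Ooperf}} \big( \{ \mathrm{Id}_\alpha : D \to (D \otimes \mathbf{k}\Omega)_{\mathrm{Tot}}\},\ \{ T_\alpha : M \to A\} \big) \cong \mathrm{Hom}_{\mathbf{Dendf}} (D, M_{ \{ T_\alpha \} }),$$ natural in both arguments; that is, the functor $\mathcal{G}:\mathbf{Dendf}\to\mathbf{Ooperf}$, $D\mapsto\{\mathrm{Id}_\alpha: D\to(D\otimes\mathbf{k}\Omega)_{\mathrm{Tot}}\}$, is left adjoint to the functor $\mathcal{F}:\mathbf{Ooperf}\to\mathbf{Dendf}$, $\{T_\alpha:M\to A\}\mapsto M_{\{T_\alpha\}}$.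
   Context: $\Omega$ is a semigroup. An $\mathcal{O}$-operator family is a collection of linear maps $T_\alpha:M\to A$ ($A$ associative algebra, $M$ an $A$-bimodule) with $T_\alpha(u) \cdot T_\beta(v) = T_{\alpha\beta}(T_\alpha(u) \cdot v + u \cdot T_\beta(v))$. $\mathbf{Ooperf}$ is the category of $\mathcal{O}$-operator families, where a morphism from $\{T_\alpha:M\to A\}$ to $\{T'_\alpha:M'\to A'\}$ is a pair $(\phi,\psi)$, $\phi:A\to A'$ an algebra homomorphism, $\psi:M\to M'$ linear, with $\psi(a\cdot u)=\phi(a)\cdot'\psi(u)$, $\psi(u\cdot a)=\psi(u)\cdot'\phi(a)$, $\phi\circ T_\alpha=T'_\alpha\circ\psi$. A dendriform family algebra is a vector space $D$ with bilinear maps $\{\prec_\alpha,\succ_\alpha\}_{\alpha\in\Omega}$ such that $(x \prec_\alpha y) \prec_\beta z = x \prec_{\alpha \beta} (y \prec_\beta z + y \succ_\alpha z)$, $(x \succ_\alpha y) \prec_\beta z = x \succ_\alpha (y \prec_\beta z)$, $(x \prec_\beta y + x \succ_\alpha y) \succ_{\alpha \beta} z = x \succ_\alpha (y \succ_\beta z)$; $\mathbf{Dendf}$ is their category with morphisms the linear maps preserving all $\prec_\alpha,\succ_\alpha$. $M_{\{T_\alpha\}}$ denotes $M$ with $u \prec_\alpha v=u \cdot T_\alpha(v)$, $u \succ_\alpha v = T_\alpha(u) \cdot v$ (a dendriform family algebra). $(D\otimes\mathbf{k}\Omega)_{\mathrm{Tot}}$ is the associative algebra $D\otimes\mathbf{k}\Omega$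 with $(x \otimes \alpha) \odot (y \otimes \beta)= (x \prec_{\beta} y + x \succ_{\alpha} y) \otimes \alpha \beta$; $D$ is a $(D\otimes\mathbf{k}\Omega)_{\mathrm{Tot}}$-bimodule via $(x \otimes \alpha) \cdot y= x \succ_{\alpha} y$, $y \cdot (x \otimes \alpha)= y \prec_{\alpha} x$; and $\mathrm{Id}_\alpha:D\to(D\otimes\mathbf{k}\Omega)_{\mathrm{Tot}}$, $\mathrm{Id}_\alpha(x)=x\otimes\alpha$, form an $\mathcal{O}$-operator family. *)

From HB Require Import structures.
From mathcomp Require Import all_boot all_algebra.
From mathcomp Require Import boolp classical_sets functions.

Set Implicit Arguments.
Unset Strict Implicit.
Unset Printing Implicit Defensive.

Import GRing.Theory.
Local Open Scope ring_scope.

(* Semigroups: the index set Omega.  The carrier is a choiceType (every set  *)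
(* is one, classically); this is only needed to have decidable equality on  *)
(* Omega, used to build k Omega.                                             *)
Record semigroup := Semigroup {
  sg_car :> choiceType;
  sg_op : sg_car -> sg_car -> sg_car;
  sg_assoc : associative sg_op
}.

Section Defs.
Variables (k : fieldType) (Om : semigroup).
Local Notation "a ** b" := (sg_op a b) (at level 40, left associativity).

Definition klinear (U V : lmodType k) (f : U -> V) :=
  forall (a : k) (u v : U), f (a *: u + v) = a *: f u + f v.

Definition kbilinear (U V W : lmodType k) (m : U -> V -> W) :=
  (forall v : V, klinear (fun u => m u v)) /\ (forall u : U, klinear (m u)).

Record dend_data := DendData {
  dcar : lmodType k;
  dprec : Om -> dcar -> dcar -> dcar;
  dsucc : Om -> dcar -> dcar -> dcar
}.

Arguments dprec : clear implicits.
Arguments dsucc : clear implicits.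

Definition is_dendf (D : dend_data) : Prop :=
  [/\ forall al, kbilinear (dprec D al),
      forall al, kbilinear (dsucc D al),
      (forall al be (x y z : dcar D),
         dprec D be (dprec D al x y) z
         = dprec D (al ** be) x (dprec D be y z + dsucc D al y z)),
      (forall al be (x y z : dcar D),
         dprec D be (dsucc D al x y) z = dsucc D al x (dprec D be y z)) &
      (forall al be (x y z : dcar D),
         dsucc D (al ** be) (dprec D be x y + dsucc D al x y) z
         = dsucc D al x (dsucc D be y z))].

Record dendf := Dendf { dend :> dend_data; dendP : is_dendf dend }.

Record dend_hom (D D' : dend_data) := DendHom {
  dh :> dcar D -> dcar D';
  dh_lin : klinear dh;
  dh_prec : forall al x y, dh (dprec D al x y) = dprec D' al (dh x) (dh y);
  dh_succ : forall al x y, dh (dsucc D al x y) = dsucc D' al (dh x) (dh y)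
}.

Record alg_data := AlgData {
  acar : lmodType k;
  amul : acar -> acar -> acar
}.

Record bimod_data (A : alg_data) := BimodData {
  mcar : lmodType k;
  lact : acar A -> mcar -> mcar;
  ract : mcar -> acar A -> mcar
}.

Arguments amul : clear implicits.
Arguments lact {A} b _ _.
Arguments ract {A} b _ _.

Record oop_data := OopData {
  oalg : alg_data;
  omod : bimod_data oalg;
  oT : Om -> mcar omod -> acar oalg
}.

Arguments oT : clear implicits.

Definition is_ooperf (O : oop_data) : Prop :=
  let A := oalg O in let M := omod O in
  [/\ kbilinear (amul A) /\ associative (amul A),
      kbilinear (lact M) /\ kbilinear (ract M),
      (forall (a b : acar A) (u : mcar M),
         lact M (amul A a b) u = lact M a (lact M b u)) /\
      (forall (a b : acar A) (u : mcar M),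
         ract M u (amul A a b) = ract M (ract M u a) b) /\
      (forall (a b : acar A) (u : mcar M),
         ract M (lact M a u) b = lact M a (ract M u b)),
      forall al, klinear (oT O al) &
      forall al be (u v : mcar M),
        amul A (oT O al u) (oT O be v)
        = oT O (al ** be) (lact M (oT O al u) v + ract M u (oT O be v))].

Record ooperf := Ooperf { oop :> oop_data; oopP : is_ooperf oop }.

Record oop_hom (O O' : oop_data) := OopHom {
  ophi : acar (oalg O) -> acar (oalg O');
  opsi : mcar (omod O) -> mcar (omod O');
  ophi_lin : klinear ophi;
  ophi_mul : forall a b, ophi (amul _ a b) = amul _ (ophi a) (ophi b);
  opsi_lin : klinear opsi;
  opsi_l : forall a u, opsi (lact _ a u) = lact _ (ophi a) (opsi u);
  opsi_r : forall u a, opsi (ract _ u a) = ract _ (opsi u) (ophi a);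
  ohom_T : forall al u, ophi (oT O al u) = oT O' al (opsi u)
}.

Definition Fobj (O : oop_data) : dend_data :=
  @DendData (mcar (omod O))
    (fun al u v => ract _ u (oT O al v))
    (fun al u v => lact _ (oT O al u) v).

(* D (x) k Omega: finitely supported functions Omega -> D.                  *)
(* x (x) alpha is the function supported at alpha with value x.             *)
Section Tensor.
Variable V : lmodType k.

Definition fsupp (f : Om -> V) : Prop :=
  exists s : seq Om, forall a, a \notin s -> f a = 0.

Definition is_fsupp : pred (Om -> V) := fun f => `[< fsupp f >].

Lemma is_fsupp_closed : subsemimod_closed is_fsupp.
Proof.
split; [split|].
- by apply/asboolP; exists [::] => a _.
- move=> f g /asboolP[s Hs] /asboolP[t Ht]; apply/asboolP; exists (s ++ t).
  move=> a; rewrite mem_cat negb_or => /andP[/Hs Ha /Ht Hb] /=.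
  by rewrite /+%R /= Ha Hb addr0.
- move=> c f /asboolP[s Hs]; apply/asboolP; exists s => a /Hs Ha.
  by rewrite /*:%R /= Ha scaler0.
Qed.

HB.instance Definition _ := GRing.isSubmodClosed.Build k (Om -> V) is_fsupp
  is_fsupp_closed.

Record tens := Tens { tval :> Om -> V; tvalP : is_fsupp tval }.
HB.instance Definition _ := [isSub for tval].
HB.instance Definition _ := [Choice of tens by <:].
HB.instance Definition _ := [SubChoice_isSubLmodule of tens by <:].

(* a chosen finite list covering the support *)
Definition tsupp (x : tens) : seq Om :=
  undup (projT1 (cid (asboolW (tvalP x)))).

Lemma single_fsupp (a : Om) (v : V) :
  is_fsupp (fun b => if b == a then v else 0).
Proof.
apply/asboolP; exists [:: a] => b; rewrite inE => /negbTE ->; done.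
Qed.

Definition tpure (v : V) (a : Om) : tens := Tens (single_fsupp a v).

End Tensor.

(* All operations are the bilinear extensions of the formulas on pure       *)
(* tensors x (x) alpha.                                                     *)
Section G.
Variable D : dend_data.

(* (x (x) al) . (y (x) be) = (x <_be y + x >_al y) (x) al be *)
Definition tot_mul (x y : tens (dcar D)) : tens (dcar D) :=
  \sum_(a <- tsupp x) \sum_(b <- tsupp y)
     tpure (dprec D b (x a) (y b) + dsucc D a (x a) (y b)) (a ** b).

Definition Tot : alg_data := @AlgData (tens (dcar D)) tot_mul.

(* (x (x) al) . y = x >_al y ;  y . (x (x) al) = y <_al x *)
Definition tot_lact (x : tens (dcar D)) (y : dcar D) : dcar D :=
  \sum_(a <- tsupp x) dsucc D a (x a) y.
Definition tot_ract (y : dcar D) (x : tens (dcar D)) : dcar D :=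
  \sum_(a <- tsupp x) dprec D a y (x a).

Definition Tot_bimod : bimod_data Tot :=
  @BimodData Tot (dcar D) tot_lact tot_ract.

Definition Gobj : oop_data :=
  @OopData Tot Tot_bimod (fun al x => tpure x al).

End G.

End Defs.

From HB Require Import structures.
From mathcomp Require Import all_boot all_algebra.
From mathcomp Require Import boolp classical_sets functions.

(* D (x) kΩ is the direct sum of copies of D indexed by Ω, so a linear map out
   of it is the same as a family of linear maps out of D.  For a morphism
   (φ, ψ) out of {Id_α}, the condition φ ∘ Id_α = T_α ∘ ψ therefore determines
   φ from ψ: φ(x ⊗ α) = T_α(ψ x); and ψ preserves ≺_α, ≻_α because
   x ≺_α y = x · (y ⊗ α) and x ≻_α y = (x ⊗ α) · y.  Conversely, for a
   dendriform morphism f : D → M_{T}, the linear extension of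
   x ⊗ α ↦ T_α(f x) is multiplicative precisely by the O-operator identity.
   Forgetting φ is then visibly natural. *)

Set Implicit Arguments.
Unset Strict Implicit.
Unset Printing Implicit Defensive.

Import GRing.Theory.
Local Open Scope ring_scope.

Section Linear.
Variable k : fieldType.

Lemma klinearD (U V : lmodType k) (f : U -> V) :
  klinear f -> forall u v, f (u + v) = f u + f v.
Proof. by move=> lin_f u v; rewrite -[u in LHS]scale1r lin_f scale1r. Qed.

Lemma klinear0 (U V : lmodType k) (f : U -> V) : klinear f -> f 0 = 0.
Proof.
move=> lin_f; apply: (addrI (f 0)).
by rewrite -klinearD // !addr0.
Qed.

Lemma klinear_sum (U V : lmodType k) (f : U -> V) (I : Type) (s : seq I)
    (F : I -> U) :
  klinear f -> f (\sum_(i <- s) F i) = \sum_(i <- s) f (F i).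
Proof.
move=> lin_f; elim: s => [|i s IHs]; first by rewrite !big_nil klinear0.
by rewrite !big_cons klinearD // IHs.
Qed.

Lemma kbilinear_suml (U V W : lmodType k) (m : U -> V -> W) (I : Type)
    (s : seq I) (F : I -> U) (v : V) :
  kbilinear m -> m (\sum_(i <- s) F i) v = \sum_(i <- s) m (F i) v.
Proof. by case=> lin_l _; apply: (klinear_sum s F (lin_l v)). Qed.

Lemma kbilinear_sumr (U V W : lmodType k) (m : U -> V -> W) (I : Type)
    (s : seq I) (F : I -> V) (u : U) :
  kbilinear m -> m u (\sum_(i <- s) F i) = \sum_(i <- s) m u (F i).
Proof. by case=> _ lin_r; apply: (klinear_sum s F (lin_r u)). Qed.

End Linear.

Lemma big_uniq_supp (I : eqType) (W : nmodType) (r s : seq I) (G : I -> W) :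
  uniq r -> uniq s -> {subset s <= r} -> (forall i, i \notin s -> G i = 0) ->
  \sum_(i <- r) G i = \sum_(i <- s) G i.
Proof.
move=> uniq_r uniq_s sub_sr G0.
rewrite (bigID (mem s)) /= [X in _ + X]big1 ?addr0; last by move=> i /G0.
rewrite -big_filter; apply/perm_big/uniq_perm; rewrite ?filter_uniq //.
by move=> i; rewrite mem_filter andb_idr //; apply: sub_sr.
Qed.

Section TensorExtension.
Variables (k : fieldType) (Om : semigroup) (V W : lmodType k).

Lemma tsupp_uniq (x : tens Om V) : uniq (tsupp x).
Proof. exact: undup_uniq. Qed.

Lemma tsuppPn (x : tens Om V) a : a \notin tsupp x -> x a = 0.
Proof. by rewrite /tsupp mem_undup; case: (cid _) => s /= /[apply]. Qed.

Lemma tpureE (v : V) (al a : Om) : tpure v al a = if a == al then v else 0.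
Proof. by []. Qed.

Lemma tpure_supp (v : V) (al a : Om) : a \notin [:: al] -> tpure v al a = 0.
Proof. by rewrite inE tpureE => /negbTE ->. Qed.

Lemma tensE (x : tens Om V) : x = \sum_(a <- tsupp x) tpure (x a) a.
Proof.
apply/val_inj/funext => b.
have val_sum (s : seq Om) :
    val (\sum_(a <- s) tpure (x a) a) b = \sum_(a <- s) tpure (x a) a b.
  elim: s => [|c s IHs]; first by rewrite !big_nil.
  by rewrite !big_cons -IHs.
rewrite val_sum -big_mkcond /=; have [b_supp | b_nsupp] := boolP (b \in tsupp x).
  rewrite (eq_bigl (pred1 b)) => [|a]; last by rewrite /= eq_sym.
  by rewrite -big_filter filter_pred1_uniq ?tsupp_uniq // big_seq1.
rewrite big1_seq ?tsuppPn // => a /andP[/eqP <-].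
by rewrite (negbTE b_nsupp).
Qed.

Definition tens_ext (L : Om -> V -> W) (x : tens Om V) : W :=
  \sum_(a <- tsupp x) L a (x a).

Variables (L : Om -> V -> W) (L_lin : forall a, klinear (L a)).

Lemma tens_extE (s : seq Om) (x : tens Om V) :
  uniq s -> (forall a, a \notin s -> x a = 0) ->
  tens_ext L x = \sum_(a <- s) L a (x a).
Proof.
move=> uniq_s x_supp; set r := undup (tsupp x ++ s).
have uniq_r : uniq r by apply: undup_uniq.
have L0 a : x a = 0 -> L a (x a) = 0 by move=> ->; apply: klinear0.
rewrite /tens_ext -(@big_uniq_supp _ _ r (tsupp x)) ?tsupp_uniq //; first last.
- by move=> a /tsuppPn /L0.
- by move=> a a_x; rewrite mem_undup mem_cat a_x.
apply: big_uniq_supp => // [a a_s|a /x_supp /L0 //].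
by rewrite mem_undup mem_cat a_s orbT.
Qed.

Lemma tens_ext_pure (v : V) (al : Om) : tens_ext L (tpure v al) = L al v.
Proof.
by rewrite (@tens_extE [:: al]) ?big_seq1 ?tpureE ?eqxx //; apply: tpure_supp.
Qed.

Lemma tens_ext_klinear : klinear (tens_ext L).
Proof.
move=> c x y; set s := undup (tsupp x ++ tsupp y ++ tsupp (c *: x + y)).
have supp_s (z : tens Om V) : {subset tsupp z <= s} ->
    forall a, a \notin s -> z a = 0.
  by move=> sub_zs a a_ns; apply: tsuppPn; apply: contra a_ns; apply: sub_zs.
have uniq_s : uniq s by apply: undup_uniq.
rewrite (tens_extE uniq_s (supp_s (c *: x + y) _)); last first.
  by move=> a a_z; rewrite mem_undup !mem_cat a_z !orbT.
rewrite (tens_extE uniq_s (supp_s x _)); last first.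
  by move=> a a_x; rewrite mem_undup !mem_cat a_x.
rewrite (tens_extE uniq_s (supp_s y _)); last first.
  by move=> a a_y; rewrite mem_undup !mem_cat a_y !orbT.
by rewrite scaler_sumr -big_split; apply: eq_bigr => a _; rewrite L_lin.
Qed.

End TensorExtension.

Lemma klinear_tens_ext (k : fieldType) (Om : semigroup) (V W : lmodType k)
    (g : tens Om V -> W) :
  klinear g -> forall x, g x = tens_ext (fun a v => g (tpure v a)) x.
Proof. by move=> lin_g x; rewrite {1}[x]tensE klinear_sum. Qed.

Lemma oop_hom_eq (k : fieldType) (Om : semigroup) (O1 O2 : oop_data k Om)
    (h1 h2 : oop_hom O1 O2) :
  ophi h1 =1 ophi h2 -> opsi h1 =1 opsi h2 -> h1 = h2.
Proof.
case: h1 h2 => [phi1 psi1 ? ? ? ? ? ?] [phi2 psi2 ? ? ? ? ? ?] /=.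
by move=> /funext eq_phi /funext eq_psi; subst; f_equal; apply: Prop_irrelevance.
Qed.

Lemma dend_hom_eq (k : fieldType) (Om : semigroup) (D1 D2 : dend_data k Om)
    (f1 f2 : dend_hom D1 D2) :
  dh f1 =1 dh f2 -> f1 = f2.
Proof.
case: f1 f2 => [g1 ? ? ?] [g2 ? ? ?] /= /funext eq_g.
by subst; f_equal; apply: Prop_irrelevance.
Qed.

Section Adjunction.
Variables (k : fieldType) (Om : semigroup) (D : dendf k Om) (O : ooperf k Om).
Local Notation T := (@oT k Om O).

Lemma tot_lact_pure (x y : dcar D) al :
  tot_lact (tpure x al) y = dsucc al x y.
Proof.
case: (dendP D) => _ succ_lin _ _ _.
exact: (tens_ext_pure (fun a => (succ_lin a).1 y)).
Qed.

Lemma tot_ract_pure (x y : dcar D) al :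
  tot_ract x (tpure y al) = dprec al x y.
Proof.
case: (dendP D) => prec_lin _ _ _ _.
exact: (tens_ext_pure (fun a => (prec_lin a).2 x)).
Qed.

Lemma oT_klinear al : klinear (T al).
Proof. by case: (oopP O). Qed.

Section Restriction.
Variable h : oop_hom (Gobj D) O.

Lemma opsi_prec al x y :
  opsi h (dprec al x y) = ract (opsi h x) (T al (opsi h y)).
Proof. by rewrite -ohom_T -(opsi_r h) /= tot_ract_pure. Qed.

Lemma opsi_succ al x y :
  opsi h (dsucc al x y) = lact (T al (opsi h x)) (opsi h y).
Proof. by rewrite -ohom_T -(opsi_l h) /= tot_lact_pure. Qed.

Definition oop_hom_restrict : dend_hom D (Fobj O) :=
  @DendHom _ _ D (Fobj O) (opsi h) (opsi_lin h) opsi_prec opsi_succ.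

Lemma ophi_tens_ext (x : tens Om (dcar D)) :
  ophi h x = tens_ext (fun a v => T a (opsi h v)) x.
Proof.
rewrite (klinear_tens_ext (ophi_lin h)).
by apply: eq_bigr => a _; rewrite (ohom_T h).
Qed.

End Restriction.

Section Extension.
Variable f : dend_hom D (Fobj O).

Let phi := tens_ext (fun a v => T a (f v)).

Let phi_klinear : klinear phi.
Proof. by apply: tens_ext_klinear => a c u v; rewrite dh_lin oT_klinear. Qed.

Let phi_pure v al : phi (tpure v al) = T al (f v).
Proof. by apply: tens_ext_pure => a c u w; rewrite dh_lin oT_klinear. Qed.

Let phi_mul x y : phi (@amul _ (Tot D) x y) = amul (phi x) (phi y).
Proof.
case: (oopP O) => [[mul_lin _] _ _ _ T_mul].
rewrite /= /tot_mul klinear_sum // kbilinear_suml //; apply: eq_bigr => a _.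
rewrite klinear_sum // kbilinear_sumr //; apply: eq_bigr => b _.
rewrite phi_pure T_mul (klinearD (dh_lin f)) addrC.
by rewrite (dh_prec f) (dh_succ f).
Qed.

Let f_lact x u : f (@lact _ _ (Tot_bimod D) x u) = lact (phi x) (f u).
Proof.
case: (oopP O) => _ [lact_lin _] _ _ _.
rewrite /= /tot_lact (klinear_sum _ _ (dh_lin f)) kbilinear_suml //.
by apply: eq_bigr => a _; apply: (dh_succ f).
Qed.

Let f_ract u x : f (@ract _ _ (Tot_bimod D) u x) = ract (f u) (phi x).
Proof.
case: (oopP O) => _ [_ ract_lin] _ _ _.
rewrite /= /tot_ract (klinear_sum _ _ (dh_lin f)) kbilinear_sumr //.
by apply: eq_bigr => a _; apply: (dh_prec f).
Qed.

Definition dend_hom_extend : oop_hom (Gobj D) O :=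
  @OopHom _ _ (Gobj D) O phi f phi_klinear phi_mul (dh_lin f) f_lact f_ract
    (fun al v => phi_pure v al).

End Extension.

Lemma oop_hom_restrictK : cancel oop_hom_restrict dend_hom_extend.
Proof. by move=> h; apply: oop_hom_eq => x //=; rewrite ophi_tens_ext. Qed.

Lemma dend_hom_extendK : cancel dend_hom_extend oop_hom_restrict.
Proof. by move=> f; apply: dend_hom_eq. Qed.

End Adjunction.

Theorem proposition2p17 (k : fieldType) (Om : semigroup) :
  exists Phi : forall (D : dendf k Om) (O : ooperf k Om),
      oop_hom (Gobj D) O -> dend_hom D (Fobj O),
    (* each Phi D O is a bijection Hom_Ooperf(G D, O) ~= Hom_Dendf(D, F O) *)
    (forall (D : dendf k Om) (O : ooperf k Om), bijective (Phi D O)) /\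
    (* naturality in both arguments: for f : D' -> D in Dendf and
       g : O -> O' in Ooperf, and h : G D -> O, if h' : G D' -> O' is the
       composite g o h o G f (where G f = (f (x) id, f)), then
       Phi h' = F g o Phi h o f  (where F g = psi_g). *)
    (forall (D D' : dendf k Om) (O O' : ooperf k Om)
            (f : dend_hom D' D) (g : oop_hom O O')
            (h : oop_hom (Gobj D) O) (h' : oop_hom (Gobj D') O'),
        (forall (x : tens Om (dcar D')) (y : tens Om (dcar D)),
            (forall a, y a = f (x a)) ->
            ophi h' x = ophi g (ophi h y)) ->
        (forall u, opsi h' u = opsi g (opsi h (f u))) ->
        forall u, Phi D' O' h' u = opsi g (Phi D O h (f u))).
Proof.
exists (@oop_hom_restrict k Om); split.
  move=> D O; exists (@dend_hom_extend k Om D O).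
  - exact: oop_hom_restrictK.
  - exact: dend_hom_extendK.
by move=> D D' O O' f g h h' _ psi_h'; apply: psi_h'.
Qed.
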